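(* Let $G$ be a free group on $k\ge 2$ generators and let $\Phi$ be a uniformly continuous action of $G$ on a non-discrete metric space $\Omega$. (1) If for some $g\in G$ the homeomorphism $f_g$ is expansive (on $\Omega$), then $\Phi$ does not have the shadowing property. (2) If for some $g\in G$ with $g\neq e$ the homeomorphism $f_g$ does not have the shadowing property, then $\Phi$ does not have the shadowing property.
   Context: An action of a group $G$ on a metric space $(\Omega,\mathrm{dist})$ is a map $\Phi:G\times\Omega\to\Omega$ such that each $f_g=\Phi(g,\cdot)$ is a homeomorphism, $\Phi(e,x)=x$, and $\Phi(g_1g_2,x)=\Phi(g_1,\Phi(g_2,x))$. For a finitely generated $G$, the action is uniformly continuous if for some finite symmetric generating set $S$ (symmetric: $s\in S\Rightarrow s^{-1}\in S$) all maps $f_s$, $s\in S$, are uniformly continuous. Fix a finite symmetric generating set $S$ of $G$. For $d>0$, a family $\{y_g\}_{g\in G}\subset\Omega$ is a $d$-pseudotrajectory if $\mathrm{dist}(y_{sg},f_s(y_g))<d$ for all $s\in S$, $g\in G$. The action has the shadowing property if for every $\varepsilon>0$ there is $d>0$ such that for every $d$-pseudotrajectory $\{y_g\}$ there is $x_e\in\Omega$ with $\mathrm{dist}(y_g,f_g(x_e))<\varepsilon$ for all $g\in G$ (this does not depend on the choice of $S$). A homeomorphism $f$ of $\Omega$ has the shadowing property if the $\mathbb Z$-action $(j,x)\mapsto f^j(x)$ with generating set $\{1,-1\}$ has it, i.e. for every $\varepsilon>0$ there is $d>0$ such that every sequence $\{x_j\}_{j\in\mathbb Z}$ with $\mathrm{dist}(x_{j+1},f(x_j))<d$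 (equivalently, also controlling $\mathrm{dist}(x_{j-1},f^{-1}(x_j))$ as required by the symmetric generating set) admits $u$ with $\mathrm{dist}(x_j,f^j(u))<\varepsilon$ for all $j$. The homeomorphism $f$ is expansive on $\Omega$ if there is $\Delta>0$ such that $\mathrm{dist}(f^j(x_1),f^j(x_2))<\Delta$ for all $j\in\mathbb Z$ implies $x_1=x_2$. *)

From Stdlib Require Import Reals Lra Lia ZArith Arith List Bool.
Import ListNotations.
Open Scope R_scope.

Definition is_metric {Omega : Type} (dist : Omega -> Omega -> R) : Prop :=
  (forall x y, 0 <= dist x y) /\
  (forall x y, dist x y = 0 <-> x = y) /\
  (forall x y, dist x y = dist y x) /\
  (forall x y z, dist x z <= dist x y + dist y z).

Definition non_discrete {Omega : Type} (dist : Omega -> Omega -> R) : Prop :=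
  exists x, forall r, 0 < r -> exists y, y <> x /\ dist x y < r.

Definition continuous_m {Omega : Type} (dist : Omega -> Omega -> R)
  (f : Omega -> Omega) : Prop :=
  forall x eps, 0 < eps -> exists delta, 0 < delta /\
    forall y, dist x y < delta -> dist (f x) (f y) < eps.

Definition unif_continuous {Omega : Type} (dist : Omega -> Omega -> R)
  (f : Omega -> Omega) : Prop :=
  forall eps, 0 < eps -> exists delta, 0 < delta /\
    forall x y, dist x y < delta -> dist (f x) (f y) < eps.

Definition inverse_pair {Omega : Type} (f finv : Omega -> Omega) : Prop :=
  (forall x, finv (f x) = x) /\ (forall x, f (finv x) = x).

Definition homeomorphism {Omega : Type} (dist : Omega -> Omega -> R)
  (f : Omega -> Omega) : Prop :=
  exists finv, inverse_pair f finv /\ continuous_m dist f /\ continuous_m dist finv.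

Fixpoint iter_n {A : Type} (n : nat) (f : A -> A) (x : A) : A :=
  match n with O => x | S n' => f (iter_n n' f x) end.

Definition zpow {A : Type} (f finv : A -> A) (j : Z) : A -> A :=
  match j with
  | Z0 => fun x => x
  | Zpos p => iter_n (Pos.to_nat p) f
  | Zneg p => iter_n (Pos.to_nat p) finv
  end.

(** Shadowing for the Z-action generated by f (generating set {1,-1}). *)
Definition hom_shadowing_with {Omega : Type} (dist : Omega -> Omega -> R)
  (f finv : Omega -> Omega) : Prop :=
  forall eps, 0 < eps -> exists d, 0 < d /\
    forall x : Z -> Omega,
      (forall j, dist (x (j + 1)%Z) (f (x j)) < d /\
                 dist (x (j - 1)%Z) (finv (x j)) < d) ->
      exists u, forall j, dist (x j) (zpow f finv j u) < eps.

(** The inverse of a bijection is unique, so "some inverse" = "the inverse". *)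
Definition hom_shadowing {Omega : Type} (dist : Omega -> Omega -> R)
  (f : Omega -> Omega) : Prop :=
  exists finv, inverse_pair f finv /\ hom_shadowing_with dist f finv.

Definition expansive {Omega : Type} (dist : Omega -> Omega -> R)
  (f : Omega -> Omega) : Prop :=
  exists finv, inverse_pair f finv /\
    exists Delta, 0 < Delta /\
      forall x1 x2, (forall j, dist (zpow f finv j x1) (zpow f finv j x2) < Delta) ->
        x1 = x2.

(** A letter (i, true) stands for a_i, (i, false) for a_i^{-1}. *)
Definition letter : Type := (nat * bool)%type.
Definition linv (l : letter) : letter := (fst l, negb (snd l)).

Definition letter_eq_dec (l1 l2 : letter) : {l1 = l2} + {l1 <> l2}.
Proof. decide equality; [apply bool_dec | apply Nat.eq_dec]. Defined.

Fixpoint reduced (w : list letter) : Prop :=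
  match w with
  | [] => True
  | l :: w' => match w' with
               | [] => True
               | l' :: _ => l' <> linv l /\ reduced w'
               end
  end.

Definition valid (k : nat) (w : list letter) : Prop :=
  Forall (fun l => (fst l < k)%nat) w.

Definition lmul (l : letter) (w : list letter) : list letter :=
  match w with
  | [] => [l]
  | l' :: w' => if letter_eq_dec l' (linv l) then w' else l :: w
  end.

Definition wmul (u v : list letter) : list letter := fold_right lmul v u.

Lemma reduced_tail l w : reduced (l :: w) -> reduced w.
Proof. destruct w; simpl; tauto. Qed.

Lemma lmul_reduced l w : reduced w -> reduced (lmul l w).
Proof.
  destruct w as [|l' w']; simpl; [tauto|].
  destruct (letter_eq_dec l' (linv l)); intros H.
  - exact (reduced_tail _ _ H).
  - simpl; split; assumption.
Qed.

Lemma lmul_valid k l w : (fst l < k)%nat -> valid k w -> valid k (lmul l w).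
Proof.
  intros Hl Hw; destruct w as [|l' w']; simpl.
  - constructor; [exact Hl | constructor].
  - destruct (letter_eq_dec l' (linv l)).
    + inversion Hw; assumption.
    + constructor; assumption.
Qed.

Lemma wmul_reduced u v : reduced v -> reduced (wmul u v).
Proof. induction u; simpl; auto using lmul_reduced. Qed.

Lemma wmul_valid k u v : valid k u -> valid k v -> valid k (wmul u v).
Proof.
  induction u as [|a u IH]; simpl; intros Hu Hv; auto.
  inversion Hu; subst; apply lmul_valid; auto.
Qed.

Record FG (k : nat) : Type := mkFG {
  fg_word : list letter;
  fg_valid : valid k fg_word;
  fg_red : reduced fg_word }.
Arguments mkFG {k}.
Arguments fg_word {k}.
Arguments fg_valid {k}.
Arguments fg_red {k}.

Definition fg_e (k : nat) : FG k := mkFG [] (Forall_nil _) I.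

Definition fg_mul {k : nat} (g h : FG k) : FG k :=
  mkFG (wmul (fg_word g) (fg_word h))
       (wmul_valid k _ _ (fg_valid g) (fg_valid h))
       (wmul_reduced _ _ (fg_red h)).

Lemma letter_valid (k i : nat) (b : bool) (H : (i < k)%nat) : valid k [(i, b)].
Proof. constructor; [exact H | constructor]. Qed.

Definition fg_letter {k : nat} (i : nat) (b : bool) (H : (i < k)%nat) : FG k :=
  mkFG [(i, b)] (letter_valid k i b H) I.

Definition is_action {k : nat} {Omega : Type} (dist : Omega -> Omega -> R)
  (Phi : FG k -> Omega -> Omega) : Prop :=
  (forall g, homeomorphism dist (Phi g)) /\
  (forall x, Phi (fg_e k) x = x) /\
  (forall g1 g2 x, Phi (fg_mul g1 g2) x = Phi g1 (Phi g2 x)).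

Definition unif_continuous_action {k : nat} {Omega : Type}
  (dist : Omega -> Omega -> R) (Phi : FG k -> Omega -> Omega) : Prop :=
  forall i b (H : (i < k)%nat), unif_continuous dist (Phi (fg_letter i b H)).

Definition pseudotrajectory {k : nat} {Omega : Type}
  (dist : Omega -> Omega -> R) (Phi : FG k -> Omega -> Omega)
  (d : R) (y : FG k -> Omega) : Prop :=
  forall i b (H : (i < k)%nat) (g : FG k),
    dist (y (fg_mul (fg_letter i b H) g)) (Phi (fg_letter i b H) (y g)) < d.

Definition action_shadowing {k : nat} {Omega : Type}
  (dist : Omega -> Omega -> R) (Phi : FG k -> Omega -> Omega) : Prop :=
  forall eps, 0 < eps -> exists d, 0 < d /\
    forall y, pseudotrajectory dist Phi d y ->
      exists xe, forall g, dist (y g) (Phi g xe) < eps.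

From Stdlib Require Import Reals Lra Lia ZArith List Bool.
From Stdlib Require Import ProofIrrelevance ClassicalEpsilon Classical.
Import ListNotations.
Open Scope R_scope.

(* Everything is read off on reduced words: [g] acts letter by letter, and a
   family indexed by words is a pseudotrajectory as soon as the defining
   inequality holds for left multiplication by single letters.  Every [g <> e]
   is a conjugate [u w u^-1] with [w] cyclically reduced, so the powers [g^j]
   are the reduced words [u w^j u^-1].

   (2) A pseudo-orbit [x] of [f_w] is spread over all words using a winding
   number around the subgroup generated by [w]; the resulting family is a
   pseudotrajectory of [Phi] whose errors are forward errors of [x].  So
   shadowing of [Phi] gives shadowing of [f_w], and conjugation by the
   uniformly continuous [f_u] transfers it to [f_g].

   (1) Take [x0] non-isolated and [y <> x0] close to it.  The family equal to
   [x0] (moved along by the words) except on words ending with two fresh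
   letters, where [y] is used, is a pseudotrajectory; along the powers of [g]
   and their extensions by the two letters, expansivity of [f_g] forces its
   shadowing point to coincide with both [x0] and [y]. *)


(** Default letter for [hd] and [last]; it never matters on non-empty words. *)
Definition dflt : letter := (0%nat, true).

Definition winv (w : list letter) : list letter := rev (map linv w).

Lemma linv_involutive l : linv (linv l) = l.
Proof. destruct l as [i b]; unfold linv; simpl; rewrite negb_involutive; reflexivity. Qed.

Lemma linv_neq l : l <> linv l.
Proof. destruct l as [i [|]]; unfold linv; simpl; congruence. Qed.

Lemma winv_app a b : winv (a ++ b) = winv b ++ winv a.
Proof. unfold winv; rewrite map_app, rev_app_distr; reflexivity. Qed.

Lemma winv_cons l a : winv (l :: a) = winv a ++ [linv l].
Proof. reflexivity. Qed.

Lemma winv_involutive a : winv (winv a) = a.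
Proof.
  unfold winv. rewrite map_rev, rev_involutive, map_map.
  erewrite map_ext; [apply map_id|]. intro; apply linv_involutive.
Qed.

Lemma winv_nil_iff a : winv a = [] -> a = [].
Proof. intro E. rewrite <- (winv_involutive a), E. reflexivity. Qed.

Lemma length_winv a : length (winv a) = length a.
Proof. unfold winv; rewrite length_rev, length_map; reflexivity. Qed.

Lemma last_default (l : list letter) d d' : l <> [] -> last l d = last l d'.
Proof.
  induction l as [|a l IH]; intros H; [congruence|].
  destruct l; simpl; auto. apply IH; discriminate.
Qed.

Lemma last_cons (a : letter) l d : last (a :: l) d = last l a.
Proof.
  destruct l as [|b l]; [reflexivity|].
  change (last (b :: l) d = last (b :: l) a). apply last_default; discriminate.
Qed.

Lemma last_app (x y : list letter) d : last (x ++ y) d = last y (last x d).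
Proof.
  revert d; induction x as [|a x IH]; intro d; [reflexivity|].
  change ((a :: x) ++ y) with (a :: (x ++ y)). rewrite !last_cons. apply IH.
Qed.

Lemma hd_app (x y : list letter) d : x <> [] -> hd d (x ++ y) = hd d x.
Proof. destruct x; simpl; congruence. Qed.

Lemma hd_winv x d : x <> [] -> hd d (winv x) = linv (last x d).
Proof.
  induction x as [|a x IH]; intro H; [congruence|].
  rewrite winv_cons. destruct x as [|b x]; [reflexivity|].
  rewrite hd_app, IH by
    (try discriminate; intro E; apply app_eq_nil in E; destruct E; discriminate).
  rewrite (last_cons a). f_equal. apply last_default; discriminate.
Qed.

Lemma last_winv x d : x <> [] -> last (winv x) d = linv (hd d x).
Proof.
  intro H. rewrite <- (winv_involutive x) at 2. rewrite hd_winv, linv_involutive; [reflexivity|].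
  intro E. apply H, winv_nil_iff, E.
Qed.

(** Reducedness of a concatenation: both factors reduced, no cancellation at the seam. *)
Definition joinable (x y : list letter) : Prop :=
  x = [] \/ y = [] \/ hd dflt y <> linv (last x dflt).

Lemma reduced_cons (a : letter) y :
  reduced (a :: y) <-> reduced y /\ (y = [] \/ hd dflt y <> linv a).
Proof.
  destruct y as [|b y]; simpl; [tauto|].
  split; [intros [H1 H2]; auto|]. intros [H1 [H2|H2]]; [discriminate|auto].
Qed.

Lemma reduced_app x y : reduced (x ++ y) <-> reduced x /\ reduced y /\ joinable x y.
Proof.
  induction x as [|a x IH]; [simpl; unfold joinable; tauto|].
  change ((a :: x) ++ y) with (a :: (x ++ y)). rewrite reduced_cons, IH, reduced_cons.
  unfold joinable. destruct x as [|c x]; [simpl; intuition discriminate|].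
  replace (last (a :: c :: x) dflt) with (last (c :: x) dflt) by reflexivity.
  rewrite hd_app by discriminate. simpl hd. intuition discriminate.
Qed.

Lemma reduced_winv x : reduced x -> reduced (winv x).
Proof.
  induction x as [|a x IH]; intro H; [exact I|].
  rewrite winv_cons. apply reduced_cons in H. destruct H as [Hx J].
  apply reduced_app. split; [auto|]. split; [exact I|].
  destruct x as [|b x]; [left; reflexivity|]. right; right.
  rewrite last_winv by discriminate. simpl in J |- *.
  destruct J as [J|J]; [discriminate|].
  rewrite linv_involutive. intro E. apply J. rewrite <- E. reflexivity.
Qed.

Fixpoint wpow (x : list letter) (n : nat) : list letter :=
  match n with O => [] | S n' => x ++ wpow x n' end.

(** A cyclically reduced word: its powers are reduced without cancellation. *)
Definition cyclically_reduced (w : list letter) : Prop :=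
  w <> [] /\ hd dflt w <> linv (last w dflt).

Lemma length_wpow x n : length (wpow x n) = (n * length x)%nat.
Proof. induction n; simpl; auto. rewrite length_app, IHn. lia. Qed.

Lemma hd_wpow x n : x <> [] -> hd dflt (wpow x (S n)) = hd dflt x.
Proof. intro H. apply hd_app, H. Qed.

Lemma last_wpow_gen x n c : x <> [] -> last (wpow x n) (last x c) = last x c.
Proof.
  intro H. induction n; simpl; auto.
  rewrite last_app, (last_default x (last x c) c) by exact H. exact IHn.
Qed.

Lemma last_wpow x n c : x <> [] -> last (wpow x (S n)) c = last x c.
Proof. intro H. simpl. rewrite last_app. apply last_wpow_gen, H. Qed.

Lemma wpow_nonempty x n : x <> [] -> wpow x (S n) <> [].
Proof. intros H E. apply app_eq_nil in E. tauto. Qed.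

Lemma reduced_wpow x n : cyclically_reduced x -> reduced x -> reduced (wpow x n).
Proof.
  intros [Hn Hc] Hr. induction n; simpl; [exact I|].
  apply reduced_app. repeat split; auto. unfold joinable.
  destruct n; [right; left; reflexivity|]. right; right. rewrite hd_wpow; auto.
Qed.

Lemma cyclically_reduced_winv x : cyclically_reduced x -> cyclically_reduced (winv x).
Proof.
  intros [Hn Hc]. split.
  - intro E. apply Hn, winv_nil_iff, E.
  - rewrite hd_winv, last_winv, linv_involutive by exact Hn.
    intro E. apply Hc. rewrite <- E. reflexivity.
Qed.

Lemma reduced_conj_wpow u x n : cyclically_reduced x -> reduced (u ++ x ++ winv u) ->
  reduced (u ++ wpow x (S n) ++ winv u).
Proof.
  intros [Hn Hcc] H.
  apply reduced_app in H. destruct H as [Hu [H J1]].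
  apply reduced_app in H. destruct H as [Hx [Hiu J2]].
  apply reduced_app. split; [exact Hu|]. split.
  - apply reduced_app. split; [apply reduced_wpow; [split|]; auto|]. split; [exact Hiu|].
    unfold joinable in *. rewrite last_wpow by exact Hn. tauto.
  - unfold joinable in *. destruct J1 as [J1|[J1|J1]]; [left; exact J1| |].
    + apply app_eq_nil in J1. tauto.
    + right; right. rewrite hd_app in * by (auto using wpow_nonempty).
      rewrite hd_wpow by exact Hn. exact J1.
Qed.

Lemma conjugate_decomposition : forall N g, (length g <= N)%nat -> reduced g -> g <> [] ->
  exists u w, g = u ++ w ++ winv u /\ cyclically_reduced w.
Proof.
  induction N as [|N IH]; intros g Hl Hr Hn.
  { destruct g; [congruence|simpl in Hl; lia]. }
  destruct g as [|a [|c g0]]; [congruence| |].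
  { exists [], [a]. split; [reflexivity|]. split; [discriminate|apply linv_neq]. }
  destruct (exists_last (l:=c :: g0)) as [g2 [b E]]; [discriminate|].
  rewrite E in *. clear E.
  destruct (letter_eq_dec b (linv a)) as [Eb|Eb].
  - subst b. destruct g2 as [|c2 g2]; [simpl in Hr; tauto|].
    change (a :: (c2 :: g2) ++ [linv a]) with ([a] ++ (c2 :: g2) ++ [linv a]) in Hr.
    apply reduced_app in Hr. destruct Hr as [_ [Hr _]].
    apply reduced_app in Hr. destruct Hr as [Hr _].
    destruct (IH (c2 :: g2)) as [u [w [Eg Hw]]]; [|exact Hr|discriminate|].
    { simpl in Hl |- *. rewrite length_app in Hl. simpl in Hl. lia. }
    exists (a :: u), w. split; [|exact Hw]. rewrite winv_cons, Eg.
    simpl. rewrite <- !app_assoc. reflexivity.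
  - exists [], (a :: g2 ++ [b]). split; [simpl; rewrite app_nil_r; reflexivity|].
    split; [discriminate|]. change (a :: g2 ++ [b]) with ((a :: g2) ++ [b]).
    rewrite last_app. simpl. intro E. apply Eb. rewrite E, linv_involutive. reflexivity.
Qed.

Lemma valid_app k x y : valid k x -> valid k y -> valid k (x ++ y).
Proof. intros; apply Forall_app; auto. Qed.

Lemma valid_app_inv k x y : valid k (x ++ y) -> valid k x /\ valid k y.
Proof. apply Forall_app. Qed.

Lemma valid_winv k x : valid k x -> valid k (winv x).
Proof.
  intro H. apply Forall_rev, Forall_map.
  eapply Forall_impl; [|exact H]. intros a Ha. exact Ha.
Qed.

Lemma valid_wpow k x n : valid k x -> valid k (wpow x n).
Proof. intro H; induction n; simpl; [constructor|]. apply valid_app; auto. Qed.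

Lemma lmul_cases l h : lmul l h = l :: h \/ h = linv l :: lmul l h.
Proof.
  unfold lmul. destruct h as [|a t]; [left; reflexivity|].
  destruct letter_eq_dec as [E|E]; [right; subst; reflexivity|left; reflexivity].
Qed.

Local Open Scope Z_scope.

Lemma zpow_of_nat {A} (f g : A -> A) n x : zpow f g (Z.of_nat n) x = iter_n n f x.
Proof. destruct n; [reflexivity|]. simpl. rewrite SuccNat2Pos.id_succ. reflexivity. Qed.

Lemma zpow_neg_nat {A} (f g : A -> A) n x : zpow f g (- Z.of_nat n) x = iter_n n g x.
Proof. destruct n; [reflexivity|]. simpl. rewrite SuccNat2Pos.id_succ. reflexivity. Qed.

Lemma Z_nat_cases (j : Z) : (exists n, j = Z.of_nat n) \/ (exists n, j = - Z.of_nat (S n)).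
Proof.
  destruct (Z_le_gt_dec 0 j).
  - left. exists (Z.to_nat j). rewrite Z2Nat.id; auto.
  - right. exists (Z.to_nat (- j) - 1)%nat.
    rewrite Nat2Z.inj_succ, Nat2Z.inj_sub, Z2Nat.id by lia. lia.
Qed.

Section IntegerIterates.
Context {A : Type} (f g : A -> A) (Hfg : forall x, f (g x) = x) (Hgf : forall x, g (f x) = x).

Lemma zpow_succ j x : zpow f g (Z.succ j) x = f (zpow f g j x).
Proof.
  destruct (Z_nat_cases j) as [[n E]|[n E]]; subst j.
  - rewrite <- Nat2Z.inj_succ, !zpow_of_nat. reflexivity.
  - replace (Z.succ (- Z.of_nat (S n))) with (- Z.of_nat n) by lia.
    rewrite !zpow_neg_nat. simpl. rewrite Hfg. reflexivity.
Qed.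

Lemma zpow_pred j x : zpow f g (Z.pred j) x = g (zpow f g j x).
Proof. rewrite <- (Z.succ_pred j) at 2. rewrite zpow_succ, Hgf. reflexivity. Qed.

Lemma zpow_add a b x : zpow f g a (zpow f g b x) = zpow f g (a + b) x.
Proof.
  induction a using Z.peano_ind; [reflexivity| |].
  - rewrite zpow_succ, IHa, <- zpow_succ. f_equal. lia.
  - rewrite zpow_pred, IHa, <- zpow_pred. f_equal. lia.
Qed.

End IntegerIterates.

Lemma zpow_conj {A} (f g F Fi : A -> A) (HFi : forall x, Fi (F x) = x) j x :
  zpow (fun y => F (f (Fi y))) (fun y => F (g (Fi y))) j (F x) = F (zpow f g j x).
Proof.
  assert (Hiter : forall h n, iter_n n (fun y => F (h (Fi y))) (F x) = F (iter_n n h x)).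
  { intros h n. induction n; simpl; [reflexivity|]. rewrite IHn, HFi. reflexivity. }
  destruct j; simpl; auto.
Qed.

Lemma zpow_id {A} (j : Z) (x : A) : zpow (fun y => y) (fun y => y) j x = x.
Proof.
  assert (Hiter : forall n, iter_n n (fun y : A => y) x = x).
  { induction n; simpl; auto. }
  destruct j; simpl; auto.
Qed.

Lemma zpow_ext {A} (f g f' g' : A -> A) :
  (forall x, f x = f' x) -> (forall x, g x = g' x) -> forall j x, zpow f g j x = zpow f' g' j x.
Proof.
  intros Hf Hg j x.
  assert (Hiter : forall h h', (forall x, h x = h' x) -> forall n, iter_n n h x = iter_n n h' x).
  { intros h h' Hh n. induction n; simpl; congruence. }
  destruct j; simpl; auto.
Qed.

(** The winding number of a word around the cyclic subgroup generated by [w].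
    For a cyclically reduced [w], [winding h] counts the suffixes of [h] that
    are positive powers of [w], minus those of the form [hd_inv :: w^-i]
    (the suffixes where a new copy of [w^-1] begins, read from the right).
    It satisfies [winding (w^j) = j] for every [j : Z], and prepending one
    letter changes it by at most one, and only at such marked suffixes. *)
Section Winding.
Variable w : list letter.
Hypothesis Hw : cyclically_reduced w.

Definition hd_inv : letter := linv (hd dflt w).
Definition pos_mark (x : list letter) : Prop := exists i, (1 <= i)%nat /\ x = wpow w i.
Definition neg_mark (x : list letter) : Prop := exists i, x = hd_inv :: wpow (winv w) i.

Fixpoint winding (x : list letter) : Z :=
  match x with
  | [] => 0
  | a :: t => winding t
      + (if excluded_middle_informative (pos_mark (a :: t)) then 1 else 0)
      - (if excluded_middle_informative (neg_mark (a :: t)) then 1 else 0)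
  end.

Definition wzpow (j : Z) : list letter :=
  if Z.leb 0 j then wpow w (Z.to_nat j) else wpow (winv w) (Z.to_nat (- j)).

Lemma wzpow_pos n : wzpow (Z.of_nat n) = wpow w n.
Proof. unfold wzpow. destruct (Z.leb_spec 0 (Z.of_nat n)); [|lia]. rewrite Nat2Z.id. reflexivity. Qed.

Lemma wzpow_neg n : wzpow (- Z.of_nat n) = wpow (winv w) n.
Proof.
  unfold wzpow. destruct (Z.leb_spec 0 (- Z.of_nat n)).
  - replace n with 0%nat by lia. reflexivity.
  - rewrite Z.opp_involutive, Nat2Z.id. reflexivity.
Qed.

Lemma w_ne : w <> [].
Proof. apply Hw. Qed.

Lemma w_cons : exists a tw, w = a :: tw.
Proof. generalize w_ne. destruct w; [tauto|eauto]. Qed.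

Lemma winv_w_ne : winv w <> [].
Proof. intro E. apply w_ne, winv_nil_iff, E. Qed.

Lemma last_winv_w c : last (winv w) c = hd_inv.
Proof. rewrite (last_default _ c dflt) by exact winv_w_ne. apply last_winv, w_ne. Qed.

Lemma last_w_neq : last w dflt <> hd_inv.
Proof.
  destruct Hw as [_ H]. unfold hd_inv. intro E. apply H. rewrite E, linv_involutive. reflexivity.
Qed.

Lemma last_pos_mark x : pos_mark x -> last x dflt = last w dflt.
Proof.
  intros [[|i] [Hi E]]; [lia|]. subst x.
  rewrite last_wpow by exact w_ne. apply last_default, w_ne.
Qed.

Lemma last_neg_mark_word i c : last (hd_inv :: wpow (winv w) i) c = hd_inv.
Proof.
  rewrite last_cons, <- (last_winv_w hd_inv) at 1.
  rewrite last_wpow_gen by exact winv_w_ne. apply last_winv_w.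
Qed.

Lemma not_both_marks x : pos_mark x -> neg_mark x -> False.
Proof.
  intros H1 [i E]. apply last_w_neq.
  rewrite <- (last_pos_mark x H1), E. apply last_neg_mark_word.
Qed.

Lemma winding_cons a t : winding (a :: t) = winding t
  + (if excluded_middle_informative (pos_mark (a :: t)) then 1 else 0)
  - (if excluded_middle_informative (neg_mark (a :: t)) then 1 else 0).
Proof. reflexivity. Qed.

Lemma not_multiple (L m i n : nat) : (1 <= L < n)%nat -> (L + m * n <> i * n)%nat.
Proof.
  intros [H1 H2] E. destruct (le_lt_dec i m) as [Hi|Hi].
  - assert (i * n <= m * n)%nat by (apply Nat.mul_le_mono_r; auto). lia.
  - assert (S m * n <= i * n)%nat by (apply Nat.mul_le_mono_r; auto). simpl in H. lia.
Qed.

Lemma winding_suffix_w : forall s q m, w = q ++ s -> q <> [] ->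
  winding (s ++ wpow w m) = winding (wpow w m).
Proof.
  induction s as [|a s IH]; intros q m E Hq; [reflexivity|].
  change ((a :: s) ++ wpow w m) with (a :: (s ++ wpow w m)). rewrite winding_cons.
  rewrite (IH (q ++ [a])) by (rewrite <- ?app_assoc; auto;
    intro X; apply app_eq_nil in X; destruct X; discriminate).
  destruct excluded_middle_informative as [[i [Hi Ei]]|_].
  { exfalso. apply (f_equal (@length letter)) in Ei, E.
    rewrite length_wpow in Ei. simpl in Ei. rewrite length_app, length_wpow in Ei.
    rewrite length_app in E. simpl in E. destruct q; [congruence|]. simpl in E.
    apply (not_multiple (S (length s)) m i (length w)); lia. }
  destruct excluded_middle_informative as [[i Ei]|_]; [|lia].
  exfalso. apply last_w_neq. rewrite <- (last_neg_mark_word i dflt), <- Ei.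
  change (a :: s ++ wpow w m) with ((a :: s) ++ wpow w m).
  rewrite last_app. replace (last (a :: s) dflt) with (last w dflt).
  - symmetry. apply last_wpow_gen, w_ne.
  - rewrite E, last_app. apply last_default; discriminate.
Qed.

Lemma winding_wpow n : winding (wpow w n) = Z.of_nat n.
Proof.
  induction n; [reflexivity|].
  destruct w_cons as [a [tw Ew]].
  assert (HS : wpow w (S n) = a :: (tw ++ wpow w n)) by (simpl; rewrite Ew; reflexivity).
  rewrite HS, winding_cons, (winding_suffix_w tw [a] n), IHn, <- HS by (auto; discriminate).
  destruct excluded_middle_informative as [_|N];
    [|exfalso; apply N; exists (S n); split; auto; lia].
  destruct excluded_middle_informative as [HB|_]; [|lia].
  exfalso. apply (not_both_marks (wpow w (S n))); auto. exists (S n); split; auto; lia.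
Qed.

Lemma winding_suffix_winv tw : w = hd dflt w :: tw -> forall s q m, winv tw = q ++ s ->
  winding (s ++ hd_inv :: wpow (winv w) m) = winding (hd_inv :: wpow (winv w) m).
Proof.
  intros Ew. induction s as [|a s IH]; intros q m E; [reflexivity|].
  change ((a :: s) ++ hd_inv :: wpow (winv w) m)
    with (a :: (s ++ hd_inv :: wpow (winv w) m)).
  rewrite winding_cons, (IH (q ++ [a])) by (rewrite <- app_assoc; exact E).
  destruct excluded_middle_informative as [HW|_].
  { exfalso. apply last_w_neq. rewrite <- (last_pos_mark _ HW).
    change (a :: s ++ hd_inv :: wpow (winv w) m)
      with ((a :: s) ++ hd_inv :: wpow (winv w) m).
    rewrite last_app. apply last_neg_mark_word. }
  destruct excluded_middle_informative as [[i Ei]|_]; [|lia].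
  exfalso. apply (f_equal (@length letter)) in Ei, E, Ew.
  simpl in Ei. rewrite length_app in Ei. simpl in Ei. rewrite !length_wpow, length_winv in Ei.
  rewrite length_app, length_winv in E. simpl in E, Ew.
  apply (not_multiple (S (length s)) m i (length w)); lia.
Qed.

Lemma winding_wpow_winv n : winding (wpow (winv w) n) = - Z.of_nat n.
Proof.
  induction n; [reflexivity|].
  destruct w_cons as [a [tw Ew]].
  assert (Ew' : w = hd dflt w :: tw) by (rewrite Ew; reflexivity).
  assert (HS : wpow (winv w) (S n) = winv tw ++ hd_inv :: wpow (winv w) n).
  { simpl. rewrite Ew' at 1. rewrite winv_cons, <- app_assoc. reflexivity. }
  rewrite HS, (winding_suffix_winv tw Ew' (winv tw) []) by reflexivity.
  rewrite winding_cons, IHn.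
  destruct excluded_middle_informative as [HW|_].
  { exfalso. apply last_w_neq. rewrite <- (last_pos_mark _ HW). apply last_neg_mark_word. }
  destruct excluded_middle_informative as [_|N]; [lia|].
  exfalso; apply N; exists n; reflexivity.
Qed.

Lemma winding_wzpow j : winding (wzpow j) = j.
Proof.
  destruct (Z_nat_cases j) as [[n E]|[n E]]; subst j.
  - rewrite wzpow_pos. apply winding_wpow.
  - rewrite wzpow_neg. apply winding_wpow_winv.
Qed.

Lemma winding_step l h :
  (winding (l :: h) = (winding h + 1)%Z /\ pos_mark (l :: h)) \/
  (winding (l :: h) = (winding h - 1)%Z /\ neg_mark (l :: h)) \/
  winding (l :: h) = winding h.
Proof.
  rewrite winding_cons.
  destruct excluded_middle_informative as [HW|NW];
  destruct excluded_middle_informative as [HB|NB].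
  - exfalso; apply (not_both_marks (l :: h)); auto.
  - left; split; auto; lia.
  - right; left; split; auto; lia.
  - right; right; lia.
Qed.

Lemma reduced_wzpow j : reduced w -> reduced (wzpow j).
Proof.
  intro Hr. unfold wzpow. destruct (0 <=? j)%Z; apply reduced_wpow;
    auto using cyclically_reduced_winv, reduced_winv.
Qed.

Lemma valid_wzpow k j : valid k w -> valid k (wzpow j).
Proof. intro Hv. unfold wzpow. destruct (0 <=? j)%Z; apply valid_wpow; auto using valid_winv. Qed.

End Winding.

Lemma winv_conj u w : winv (u ++ w ++ winv u) = u ++ winv w ++ winv u.
Proof. rewrite !winv_app, winv_involutive, app_assoc. reflexivity. Qed.

Lemma wzpow_nonzero w j : j <> 0%Z ->
  exists x n, (x = w \/ x = winv w) /\ wzpow w j = wpow x (S n).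
Proof.
  intro Hj. destruct (Z_nat_cases j) as [[[|n] E]|[n E]]; subst j.
  - contradiction.
  - exists w, n. split; [left; reflexivity|]. apply wzpow_pos.
  - exists (winv w), n. split; [right; reflexivity|]. apply wzpow_neg.
Qed.

Lemma conj_wzpow_reduced u w (Hc : cyclically_reduced w) (Hred : reduced (u ++ w ++ winv u)) j :
  j <> 0%Z ->
  reduced (u ++ wzpow w j ++ winv u) /\
  (last (u ++ wzpow w j ++ winv u) dflt = last (u ++ w ++ winv u) dflt \/
   last (u ++ wzpow w j ++ winv u) dflt = last (u ++ winv w ++ winv u) dflt).
Proof.
  intro Hj. destruct (wzpow_nonzero w j Hj) as [x [n [Hx E]]]. rewrite E.
  assert (Hcx : cyclically_reduced x) by (destruct Hx; subst; auto using cyclically_reduced_winv).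
  assert (Hrx : reduced (u ++ x ++ winv u)).
  { destruct Hx; subst; [exact Hred|]. rewrite <- winv_conj. apply reduced_winv, Hred. }
  split; [apply reduced_conj_wpow; auto|].
  rewrite !last_app, last_wpow by apply Hcx. rewrite <- !last_app.
  destruct Hx; subst; auto.
Qed.

Lemma pick_letter k (Hk : (2 <= k)%nat) (a b c : letter) :
  exists l, (fst l < k)%nat /\ l <> a /\ l <> b /\ l <> c.
Proof.
  assert (Hsplit : forall l, l = a \/ l = b \/ l = c \/ (l <> a /\ l <> b /\ l <> c)).
  { intro l. destruct (letter_eq_dec l a), (letter_eq_dec l b), (letter_eq_dec l c); tauto. }
  destruct (Hsplit (0%nat, true)) as [?|[?|[?|?]]];
  destruct (Hsplit (0%nat, false)) as [?|[?|[?|?]]];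
  destruct (Hsplit (1%nat, true)) as [?|[?|[?|?]]];
  destruct (Hsplit (1%nat, false)) as [?|[?|[?|?]]];
  first [congruence | eexists; split; [|eassumption]; simpl; lia].
Qed.

Definition ends_with (m h : list letter) : Prop := exists q, h = q ++ m.

Lemma ends_with_lmul_enter b t l h :
  ends_with (b :: t) (lmul l h) -> ~ ends_with (b :: t) h -> l = b /\ h = t.
Proof.
  intros [q Eq] N. destruct (lmul_cases l h) as [E|E].
  - rewrite E in Eq. destruct q as [|c q]; [injection Eq; auto|].
    exfalso. apply N. exists q. injection Eq; auto.
  - exfalso. apply N. exists (linv l :: q). rewrite E, Eq. reflexivity.
Qed.

Lemma ends_with_lmul_leave b t l h :
  ends_with (b :: t) h -> ~ ends_with (b :: t) (lmul l h) -> l = linv b /\ h = b :: t.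
Proof.
  intros [q Eq] N. destruct (lmul_cases l h) as [E|E].
  - exfalso. apply N. exists (l :: q). rewrite E, Eq. reflexivity.
  - rewrite E in Eq. destruct q as [|c q].
    + injection Eq as El Et.
      split; [rewrite <- El, linv_involutive|rewrite E, El, Et]; reflexivity.
    + exfalso. apply N. exists q. injection Eq; auto.
Qed.

Lemma append_fresh_pair (L1 L2 b1 b2 : letter) x :
  b2 <> L1 -> b2 <> L2 -> b1 <> linv L1 -> b1 <> linv L2 -> b1 <> linv b2 ->
  reduced x -> (x = [] \/ last x dflt = L1 \/ last x dflt = L2) ->
  reduced (x ++ [b1; b2]) /\ ~ ends_with [b1; b2] x.
Proof.
  intros N21 N22 N11 N12 N13 Hx Hlast. split.
  - apply reduced_app. split; [exact Hx|]. split.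
    + simpl. split; [|exact I]. intro E. apply N13. rewrite E, linv_involutive. reflexivity.
    + unfold joinable. destruct Hlast as [E|[E|E]]; [left; exact E| |];
        right; right; simpl; rewrite E; assumption.
  - intros [q Eq]. destruct Hlast as [E|[E|E]].
    + rewrite E in Eq. symmetry in Eq. apply app_eq_nil in Eq. destruct Eq; discriminate.
    + apply N21. rewrite <- E, Eq, last_app. reflexivity.
    + apply N22. rewrite <- E, Eq, last_app. reflexivity.
Qed.

Local Open Scope R_scope.

Definition forward_shadowing {Omega : Type} (dist : Omega -> Omega -> R)
  (f g : Omega -> Omega) : Prop :=
  forall eps, 0 < eps -> exists d, 0 < d /\
    forall x : Z -> Omega, (forall j, dist (x (j + 1)%Z) (f (x j)) < d) ->
      exists u, forall j, dist (x j) (zpow f g j u) < eps.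

Lemma forward_shadowing_hom {Omega} (dist : Omega -> Omega -> R) f g :
  forward_shadowing dist f g -> hom_shadowing_with dist f g.
Proof.
  intros Hs eps He. destruct (Hs eps He) as [d [Hd Hx]].
  exists d. split; [exact Hd|]. intros x Hpt. apply Hx. intro j. apply Hpt.
Qed.

Lemma forward_shadowing_conj {Omega} (dist : Omega -> Omega -> R) (f g F Fi : Omega -> Omega) :
  inverse_pair F Fi -> unif_continuous dist F -> unif_continuous dist Fi ->
  forward_shadowing dist f g ->
  forward_shadowing dist (fun y => F (f (Fi y))) (fun y => F (g (Fi y))).
Proof.
  intros [HFi HiF] HuF HuFi Hs eps He.
  destruct (HuF eps He) as [d1 [Hd1 HF]].
  destruct (Hs d1 Hd1) as [d [Hd Hshadow]].
  destruct (HuFi d Hd) as [d2 [Hd2 HFi']].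
  exists d2. split; [exact Hd2|]. intros x Hx.
  destruct (Hshadow (fun j => Fi (x j))) as [z Hz].
  { intro j. rewrite <- (HFi (f (Fi (x j)))). apply HFi', Hx. }
  exists (F z). intro j. rewrite zpow_conj by exact HFi.
  rewrite <- (HiF (x j)). apply HF, Hz.
Qed.

Lemma unif_continuous_comp {Omega} (dist : Omega -> Omega -> R) f g :
  unif_continuous dist f -> unif_continuous dist g -> unif_continuous dist (fun x => f (g x)).
Proof.
  intros Hf Hg eps He. destruct (Hf eps He) as [d1 [Hd1 H1]].
  destruct (Hg d1 Hd1) as [d2 [Hd2 H2]]. exists d2; split; auto.
Qed.

Lemma unif_continuous_id {Omega} (dist : Omega -> Omega -> R) : unif_continuous dist (fun x => x).
Proof. intros eps He; exists eps; split; auto. Qed.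

Lemma inverse_pair_unique {A} (f g1 g2 : A -> A) :
  inverse_pair f g1 -> inverse_pair f g2 -> forall x, g1 x = g2 x.
Proof. intros [H1 _] [_ H2] x. rewrite <- (H2 x) at 1. apply H1. Qed.

Lemma fg_ext {k} (g h : FG k) : fg_word g = fg_word h -> g = h.
Proof.
  destruct g as [wg vg rg], h as [wh vh rh]; simpl; intro E; subst wh.
  rewrite (proof_irrelevance _ vg vh), (proof_irrelevance _ rg rh). reflexivity.
Qed.

Lemma fg_conjugate_decomposition {k} (g : FG k) : g <> fg_e k ->
  exists u w, fg_word g = u ++ w ++ winv u /\ cyclically_reduced w /\
    valid k u /\ valid k w /\ reduced w.
Proof.
  intro Hg. assert (Hn : fg_word g <> []).
  { intro E. apply Hg, fg_ext, E. }
  destruct (conjugate_decomposition _ _ (le_n _) (fg_red g) Hn) as [u [w [E Hc]]].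
  pose proof (fg_valid g) as Hv. pose proof (fg_red g) as Hr. rewrite E in Hv, Hr.
  apply valid_app_inv in Hv as [Hvu Hv]. apply valid_app_inv in Hv as [Hvw _].
  apply reduced_app in Hr as [_ [Hr _]]. apply reduced_app in Hr as [Hrw _].
  exists u, w. auto.
Qed.

Section ActionOnWords.
Variables (k : nat) (Omega : Type) (dist : Omega -> Omega -> R) (Phi : FG k -> Omega -> Omega).
Hypothesis Hact : is_action dist Phi.
Hypothesis Huc : unif_continuous_action dist Phi.
Hypothesis Hmetric : is_metric dist.

Definition act_letter (l : letter) : Omega -> Omega :=
  match lt_dec (fst l) k with
  | left H => Phi (fg_letter (fst l) (snd l) H)
  | right _ => fun x => x
  end.

Definition act_word (w : list letter) (x : Omega) : Omega := fold_right act_letter x w.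

Lemma act_word_app a b x : act_word (a ++ b) x = act_word a (act_word b x).
Proof. apply fold_right_app. Qed.

Lemma act_letter_fg i b H x : Phi (fg_letter i b H) x = act_letter (i, b) x.
Proof.
  unfold act_letter; simpl. destruct (lt_dec i k) as [H'|H']; [|contradiction].
  rewrite (proof_irrelevance _ H H'). reflexivity.
Qed.

Lemma act_letter_cancel l x : act_letter l (act_letter (linv l) x) = x.
Proof.
  destruct l as [i b]. unfold act_letter, linv; simpl. destruct (lt_dec i k) as [H|H]; auto.
  destruct Hact as [_ [He Hm]]. rewrite <- Hm.
  replace (fg_mul (fg_letter i b H) (fg_letter i (negb b) H)) with (fg_e k); [apply He|].
  apply fg_ext. unfold fg_mul, fg_letter, fg_e, wmul, lmul; cbn [fg_word fold_right].
  destruct (letter_eq_dec (i, negb b) (linv (i, b))) as [E|E];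
    [reflexivity|]. exfalso; apply E; reflexivity.
Qed.

Lemma act_letter_cancel' l x : act_letter (linv l) (act_letter l x) = x.
Proof. rewrite <- (linv_involutive l) at 2. apply act_letter_cancel. Qed.

Lemma act_word_lmul l h x : act_word (lmul l h) x = act_letter l (act_word h x).
Proof.
  unfold lmul. destruct h as [|a h]; [reflexivity|].
  destruct letter_eq_dec as [E|E]; [|reflexivity].
  subst a. simpl. rewrite act_letter_cancel. reflexivity.
Qed.

Lemma Phi_word g x : Phi g x = act_word (fg_word g) x.
Proof.
  destruct g as [w v r]. simpl. revert v r; induction w as [|a w IH]; intros v r.
  { replace (mkFG [] v r) with (fg_e k) by (apply fg_ext; reflexivity). apply Hact. }
  assert (Ha : (fst a < k)%nat) by (inversion v; auto).
  assert (v' : valid k w) by (inversion v; auto).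
  replace (mkFG (a :: w) v r)
    with (fg_mul (fg_letter (fst a) (snd a) Ha) (mkFG w v' (reduced_tail _ _ r))).
  - destruct Hact as [_ [_ Hm]]. rewrite Hm, IH, act_letter_fg. destruct a; reflexivity.
  - apply fg_ext. simpl. unfold lmul. destruct w as [|c w]; [destruct a; reflexivity|].
    destruct letter_eq_dec as [E|E]; [|destruct a; reflexivity].
    exfalso. destruct r as [r _]. apply r. rewrite E. destruct a; reflexivity.
Qed.

Lemma act_word_winv_l w x : act_word (winv w) (act_word w x) = x.
Proof.
  induction w as [|a w IH]; [reflexivity|].
  rewrite winv_cons, act_word_app. simpl. rewrite act_letter_cancel'. apply IH.
Qed.

Lemma act_word_winv_r w x : act_word w (act_word (winv w) x) = x.
Proof. rewrite <- (winv_involutive w) at 1. apply act_word_winv_l. Qed.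

Lemma act_word_inverse_pair w : inverse_pair (act_word w) (act_word (winv w)).
Proof. split; intro; [apply act_word_winv_l|apply act_word_winv_r]. Qed.

Lemma act_word_wpow x n y : iter_n n (act_word x) y = act_word (wpow x n) y.
Proof. induction n; simpl; [reflexivity|]. rewrite act_word_app, IHn. reflexivity. Qed.

Lemma act_word_wzpow w j y :
  act_word (wzpow w j) y = zpow (act_word w) (act_word (winv w)) j y.
Proof.
  destruct (Z_nat_cases j) as [[n E]|[n E]]; subst j.
  - rewrite wzpow_pos, zpow_of_nat, act_word_wpow. reflexivity.
  - rewrite wzpow_neg, zpow_neg_nat, act_word_wpow. reflexivity.
Qed.

Lemma unif_continuous_act_letter l : unif_continuous dist (act_letter l).
Proof. unfold act_letter. destruct lt_dec; [apply Huc|apply unif_continuous_id]. Qed.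

Lemma unif_continuous_act_word w : unif_continuous dist (act_word w).
Proof.
  induction w as [|a w IH]; [apply unif_continuous_id|].
  apply (unif_continuous_comp dist (act_letter a) (act_word w));
    auto using unif_continuous_act_letter.
Qed.

Lemma pseudotrajectory_of_words d (Y : list letter -> Omega) :
  (forall l h, dist (Y (lmul l h)) (act_letter l (Y h)) < d) ->
  pseudotrajectory dist Phi d (fun g => Y (fg_word g)).
Proof. intros HY i b H g. simpl. rewrite act_letter_fg. apply HY. Qed.

Lemma dist_sym x y : dist x y = dist y x.
Proof. apply Hmetric. Qed.

Lemma dist_self x : dist x x = 0.
Proof. apply Hmetric. reflexivity. Qed.

(** Untwisting [x j] by [F^-j] and moving
    it along the winding number spreads [x] into a family indexed by all
    words, which is a pseudotrajectory of the whole action: the errors only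
    appear at marked suffixes, where they are forward errors of [x] (possibly
    seen through the letter [hd_inv]). *)
Section ForwardShadowing.
Variable w : list letter.
Hypothesis Hw : cyclically_reduced w.

Let F := act_word w.
Let G := act_word (winv w).

Definition base_point (x : Z -> Omega) (j : Z) : Omega := zpow F G (- j) (x j).

Definition spread (x : Z -> Omega) (h : list letter) : Omega :=
  act_word h (base_point x (winding w h)).

Lemma act_base_point x j : act_word (wzpow w j) (base_point x j) = x j.
Proof.
  unfold base_point. rewrite act_word_wzpow, zpow_add
    by (intro; first [apply act_word_winv_r|apply act_word_winv_l]).
  replace (j + - j)%Z with 0%Z by lia. reflexivity.
Qed.

Lemma act_base_point_pred x j : act_word (wzpow w j) (base_point x (j - 1)) = F (x (j - 1)%Z).
Proof.
  unfold base_point. rewrite act_word_wzpow, zpow_add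
    by (intro; first [apply act_word_winv_r|apply act_word_winv_l]).
  replace (j + - (j - 1))%Z with 1%Z by lia. reflexivity.
Qed.

Variables (d0 : R) (x : Z -> Omega).
Hypothesis Hfwd : forall j, dist (x j) (F (x (j - 1)%Z)) < d0.
Hypothesis Hfwd_hd : forall j,
  dist (act_letter (hd_inv w) (F (x (j - 1)%Z))) (act_letter (hd_inv w) (x j)) < d0.

(** A single-letter step, in both directions (left multiplication may cancel
    a letter instead of prepending it). *)
Lemma spread_step l t :
  dist (spread x (l :: t)) (act_letter l (spread x t)) < d0 /\
  dist (spread x t) (act_letter (linv l) (spread x (l :: t))) < d0.
Proof.
  assert (Hd0 : 0 < d0).
  { apply (Rle_lt_trans _ _ _ (proj1 Hmetric _ _) (Hfwd 0%Z)). }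
  unfold spread. destruct (winding_step w Hw l t) as [[E [i [Hi Ei]]]|[[E [i Ei]]|E]].
  - assert (Hl : linv l = hd_inv w).
    { destruct i as [|i]; [lia|]. apply (f_equal (hd dflt)) in Ei.
      rewrite hd_wpow in Ei by apply (w_ne w Hw). unfold hd_inv. rewrite <- Ei. reflexivity. }
    rewrite Ei, winding_wpow in E by exact Hw.
    replace (winding w t) with (Z.of_nat i - 1)%Z by lia.
    rewrite Ei, winding_wpow by exact Hw.
    split; [|rewrite <- (act_letter_cancel' l (act_word t _)), Hl].
    all: change (act_letter l (act_word t ?y)) with (act_word (l :: t) y).
    all: rewrite Ei, <- wzpow_pos, act_base_point, act_base_point_pred.
    + apply Hfwd.
    + apply Hfwd_hd.
  - assert (Ht : t = wzpow w (- Z.of_nat i)) by (rewrite wzpow_neg; injection Ei; auto).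
    assert (Hl : l = hd_inv w) by (injection Ei; auto).
    rewrite Ht in E. rewrite winding_wzpow in E by exact Hw. rewrite Ht, E, winding_wzpow by exact Hw.
    change (act_word (l :: ?t) ?y) with (act_letter l (act_word t y)).
    rewrite act_letter_cancel', act_base_point, act_base_point_pred, Hl.
    split; [apply Hfwd_hd|apply Hfwd].
  - rewrite E. change (act_word (l :: t) ?y) with (act_letter l (act_word t y)).
    rewrite act_letter_cancel', !dist_self. split; exact Hd0.
Qed.

Lemma spread_pseudotrajectory l h :
  dist (spread x (lmul l h)) (act_letter l (spread x h)) < d0.
Proof.
  destruct (lmul_cases l h) as [E|E].
  - rewrite E. apply spread_step.
  - rewrite E at 2. pose proof (proj2 (spread_step (linv l) (lmul l h))) as H.
    rewrite linv_involutive in H. exact H.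
Qed.

End ForwardShadowing.

Lemma spread_wzpow w (Hw : cyclically_reduced w) x j : spread w x (wzpow w j) = x j.
Proof. unfold spread. rewrite winding_wzpow by exact Hw. apply act_base_point. Qed.


Lemma cyclic_forward_shadowing w : cyclically_reduced w -> valid k w -> reduced w ->
  action_shadowing dist Phi -> forward_shadowing dist (act_word w) (act_word (winv w)).
Proof.
  intros Hw Hv Hr Hsh eps He.
  destruct (Hsh eps He) as [d0 [Hd0 Hshadow]].
  destruct (unif_continuous_act_letter (hd_inv w) d0 Hd0) as [d2 [Hd2 Hu]].
  exists (Rmin d0 d2). split; [apply Rmin_pos; assumption|]. intros x Hx.
  assert (Hfwd : forall j, dist (x j) (act_word w (x (j - 1)%Z)) < Rmin d0 d2).
  { intro j. specialize (Hx (j - 1)%Z). replace (j - 1 + 1)%Z with j in Hx by lia. exact Hx. }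
  destruct (Hshadow (fun g => spread w x (fg_word g))) as [z Hz].
  { apply pseudotrajectory_of_words. intros l h. apply (spread_pseudotrajectory w Hw).
    - intro j. pose proof (Hfwd j). pose proof (Rmin_l d0 d2). lra.
    - intro j. apply Hu. rewrite dist_sym. pose proof (Hfwd j). pose proof (Rmin_r d0 d2). lra. }
  exists z. intro j.
  specialize (Hz (mkFG (wzpow w j) (valid_wzpow w k j Hv) (reduced_wzpow w Hw j Hr))).
  rewrite Phi_word in Hz. simpl in Hz. rewrite spread_wzpow, act_word_wzpow in Hz by exact Hw.
  exact Hz.
Qed.

Lemma forward_shadowing_ext (f g f' g' : Omega -> Omega) :
  (forall x, f x = f' x) -> (forall x, g x = g' x) ->
  forward_shadowing dist f g -> forward_shadowing dist f' g'.
Proof.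
  intros Hf Hg Hs eps He. destruct (Hs eps He) as [d [Hd Hx]].
  exists d. split; [exact Hd|]. intros x Hpt.
  destruct (Hx x) as [z Hz]; [intro j; rewrite Hf; apply Hpt|].
  exists z. intro j. rewrite <- (zpow_ext f g f' g' Hf Hg). apply Hz.
Qed.

(** Part (2): shadowing of the action forces shadowing of every [f_g], [g <> e]:
    [f_g] is conjugate to the action of a cyclically reduced word. *)
Lemma shadowing_of_elements g : g <> fg_e k -> action_shadowing dist Phi ->
  hom_shadowing dist (Phi g).
Proof.
  intros Hg Hsh.
  destruct (fg_conjugate_decomposition g Hg) as [u [w [Eg [Hc [Hvu [Hvw Hrw]]]]]].
  exists (act_word (winv (fg_word g))). split.
  { split; intro x; rewrite Phi_word; [apply act_word_winv_l|apply act_word_winv_r]. }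
  apply forward_shadowing_hom.
  apply (forward_shadowing_ext
    (fun y => act_word u (act_word w (act_word (winv u) y)))
    (fun y => act_word u (act_word (winv w) (act_word (winv u) y)))).
  - intro x. rewrite Phi_word, Eg, !act_word_app. reflexivity.
  - intro x. rewrite Eg, winv_conj, !act_word_app. reflexivity.
  - apply forward_shadowing_conj; auto using act_word_inverse_pair, unif_continuous_act_word.
    apply cyclic_forward_shadowing; assumption.
Qed.

(** An orbit coding of [f_g] is a family of reduced words [h j]
    acting as the iterates [f_g^j] and ending (when non-empty) with one of
    two fixed letters; this lets us append letters to them freely. *)
Definition orbit_coding (g : FG k) (finv : Omega -> Omega) (L1 L2 : letter)
  (h : Z -> list letter) : Prop :=
  forall j, valid k (h j) /\ reduced (h j) /\
    (h j = [] \/ last (h j) dflt = L1 \/ last (h j) dflt = L2) /\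
    (forall y, act_word (h j) y = zpow (Phi g) finv j y).

Lemma zpow_Phi_conj g u w finv : fg_word g = u ++ w ++ winv u -> inverse_pair (Phi g) finv ->
  forall j y, zpow (Phi g) finv j y = act_word u (act_word (wzpow w j) (act_word (winv u) y)).
Proof.
  intros Eg Hinv j y.
  rewrite (zpow_ext (Phi g) finv
    (fun y => act_word u (act_word w (act_word (winv u) y)))
    (fun y => act_word u (act_word (winv w) (act_word (winv u) y)))).
  - rewrite <- (act_word_winv_r u y) at 1. rewrite zpow_conj by apply act_word_winv_l.
    rewrite act_word_wzpow. reflexivity.
  - intro x. rewrite Phi_word, Eg, !act_word_app. reflexivity.
  - intro x. rewrite (inverse_pair_unique (Phi g) finv (act_word (winv (fg_word g))) Hinv).
    + rewrite Eg, winv_conj, !act_word_app. reflexivity.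
    + split; intro; rewrite Phi_word; [apply act_word_winv_l|apply act_word_winv_r].
Qed.

Lemma orbit_coding_exists g finv : inverse_pair (Phi g) finv ->
  exists L1 L2 h, orbit_coding g finv L1 L2 h.
Proof.
  intro Hinv. destruct (classic (g = fg_e k)) as [->|Hg].
  - exists dflt, dflt, (fun _ => []). intro j.
    repeat split; [constructor|left; reflexivity|]. intro y.
    assert (He : forall x, Phi (fg_e k) x = x) by apply Hact.
    rewrite (zpow_ext _ _ (fun x => x) (fun x => x) He), zpow_id; [reflexivity|].
    apply (inverse_pair_unique _ _ _ Hinv). split; intro; apply He.
  - destruct (fg_conjugate_decomposition g Hg) as [u [w [Eg [Hc [Hvu [Hvw _]]]]]].
    assert (Hred : reduced (u ++ w ++ winv u)) by (rewrite <- Eg; apply fg_red).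
    exists (last (u ++ w ++ winv u) dflt), (last (u ++ winv w ++ winv u) dflt),
      (fun j => if Z.eqb j 0 then [] else u ++ wzpow w j ++ winv u).
    intro j. destruct (Z.eqb j 0) eqn:Hj.
    + apply Z.eqb_eq in Hj as ->. repeat split; [apply Forall_nil|left; reflexivity].
    + apply Z.eqb_neq in Hj. destruct (conj_wzpow_reduced u w Hc Hred j Hj) as [Hr Hl].
      repeat split; [| exact Hr | right; exact Hl |].
      * apply valid_app; [|apply valid_app]; auto using valid_wzpow, valid_winv.
      * intro y. rewrite (zpow_Phi_conj g u w finv Eg Hinv), !act_word_app. reflexivity.
Qed.

Lemma orbit_rigidity g finv L1 L2 h Delta (p : list letter -> Omega) z m v :
  orbit_coding g finv L1 L2 h ->
  (forall x1 x2, (forall j, dist (zpow (Phi g) finv j x1) (zpow (Phi g) finv j x2) < Delta) ->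
     x1 = x2) ->
  (forall g', dist (act_word (fg_word g') (p (fg_word g'))) (Phi g' z) < Delta) ->
  valid k m -> (forall j, reduced (h j ++ m) /\ p (h j ++ m) = v) ->
  act_word m v = act_word m z.
Proof.
  intros Hh Hex Hz Hvm Hm. apply Hex. intro j.
  destruct (Hh j) as [Hv [_ [_ Hhj]]]. destruct (Hm j) as [Hr Hp].
  rewrite <- !Hhj.
  specialize (Hz (mkFG (h j ++ m) (valid_app _ _ _ Hv Hvm) Hr)).
  rewrite Phi_word in Hz. simpl in Hz. rewrite Hp, !act_word_app in Hz. exact Hz.
Qed.

Definition bump (m : list letter) (y x0 : Omega) (h : list letter) : Omega :=
  if excluded_middle_informative (ends_with m h) then y else x0.

Lemma bump_pseudotrajectory b t x0 d : 0 < d -> exists r, 0 < r /\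
  forall y, dist y x0 < r -> forall l h,
    dist (act_word (lmul l h) (bump (b :: t) y x0 (lmul l h)))
         (act_letter l (act_word h (bump (b :: t) y x0 h))) < d.
Proof.
  intro Hd.
  destruct (unif_continuous_act_word (b :: t) d Hd) as [r1 [Hr1 H1]].
  destruct (unif_continuous_act_word t d Hd) as [r2 [Hr2 H2]].
  exists (Rmin r1 r2). split; [apply Rmin_pos; assumption|]. intros y Hy l h.
  pose proof (Rmin_l r1 r2). pose proof (Rmin_r r1 r2).
  rewrite act_word_lmul. unfold bump.
  destruct (excluded_middle_informative (ends_with (b :: t) (lmul l h))) as [E1|N1];
  destruct (excluded_middle_informative (ends_with (b :: t) h)) as [E2|N2].
  - rewrite dist_self. exact Hd.
  - destruct (ends_with_lmul_enter b t l h E1 N2) as [-> ->].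
    apply (H1 y x0). lra.
  - destruct (ends_with_lmul_leave b t l h E2 N1) as [-> ->].
    change (act_word (b :: t) ?p) with (act_letter b (act_word t p)).
    rewrite !act_letter_cancel'. apply H2. rewrite dist_sym. lra.
  - rewrite dist_self. exact Hd.
Qed.

Lemma expansive_element_blocks_shadowing (Hk : (2 <= k)%nat) (Hnd : non_discrete dist) g :
  expansive dist (Phi g) -> ~ action_shadowing dist Phi.
Proof.
  intros [finv [Hinv [Delta [HD Hex]]]] Hsh.
  destruct (orbit_coding_exists g finv Hinv) as [L1 [L2 [h Hh]]].
  destruct (pick_letter k Hk L1 L2 L1) as [b2 [Hb2 [N21 [N22 _]]]].
  destruct (pick_letter k Hk (linv L1) (linv L2) (linv b2)) as [b1 [Hb1 [N11 [N12 N13]]]].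
  assert (Hfresh : forall j, reduced (h j ++ [b1; b2]) /\ ~ ends_with [b1; b2] (h j)).
  { intro j. destruct (Hh j) as [_ [Hr [Hl _]]]. apply append_fresh_pair with L1 L2; assumption. }
  destruct Hnd as [x0 Hx0].
  destruct (Hsh Delta HD) as [d [Hd Hshadow]].
  destruct (bump_pseudotrajectory b1 [b2] x0 d Hd) as [r [Hr Hbump]].
  destruct (Hx0 r Hr) as [y [Hyx Hy]].
  set (p := bump [b1; b2] y x0).
  destruct (Hshadow (fun g' => act_word (fg_word g') (p (fg_word g')))) as [z Hz].
  { apply (pseudotrajectory_of_words d (fun h => act_word h (p h))).
    apply Hbump. rewrite dist_sym. exact Hy. }
  assert (Hx0z : act_word [] x0 = act_word [] z).
  { apply (orbit_rigidity g finv L1 L2 h Delta p z [] x0 Hh Hex Hz (Forall_nil _)).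
    intro j. rewrite app_nil_r. split; [apply Hh|]. unfold p, bump.
    destruct excluded_middle_informative as [E|_]; [exfalso; apply (Hfresh j), E|reflexivity]. }
  assert (Hyz : act_word [b1; b2] y = act_word [b1; b2] z).
  { apply (orbit_rigidity g finv L1 L2 h Delta p z [b1; b2] y Hh Hex Hz);
      [repeat constructor; assumption|].
    intro j. split; [apply Hfresh|]. unfold p, bump.
    destruct excluded_middle_informative as [_|N]; [reflexivity|].
    exfalso. apply N. exists (h j). reflexivity. }
  apply Hyx. rewrite <- (act_word_winv_l [b1; b2] y), Hyz, act_word_winv_l. symmetry. exact Hx0z.
Qed.

End ActionOnWords.

Theorem theorem4 (k : nat) (Hk : (2 <= k)%nat)
  (Omega : Type) (dist : Omega -> Omega -> R)
  (Hmetric : is_metric dist) (Hnd : non_discrete dist)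
  (Phi : FG k -> Omega -> Omega)
  (Hact : is_action dist Phi) (Huc : unif_continuous_action dist Phi) :
  ((exists g : FG k, expansive dist (Phi g)) -> ~ action_shadowing dist Phi) /\
  ((exists g : FG k, g <> fg_e k /\ ~ hom_shadowing dist (Phi g)) ->
     ~ action_shadowing dist Phi).
Proof.
  split.
  - intros [g Hexp]. exact (expansive_element_blocks_shadowing k Omega dist Phi Hact Huc
      Hmetric Hk Hnd g Hexp).
  - intros [g [Hg Hnsh]] Hsh. apply Hnsh.
    exact (shadowing_of_elements k Omega dist Phi Hact Huc Hmetric g Hg Hsh).
Qed.
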